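(* For every message $M$ and formula $\phi$: $\vdash\mathsf{k}_{\mathsf{CM}}(M)\to\phi$ if and only if $\vdash[M]\phi$.
   Context: Fix a finite set $\mathcal{A}$ of agent names containing a distinguished name $\mathsf{CM}$. Messages: $M ::= a \mid B \mid (M,M)$ ($a\in\mathcal{A}$, $B$ optional data constants, pairs). $\mathcal{P}$ is a denumerable set of propositional variables containing atoms $\mathsf{k}_a(M)$ (''$a$ knows $M$''). Formulas: $\phi ::= P \mid \phi\wedge\phi \mid \phi\vee\phi \mid \neg\phi \mid \phi\to\phi \mid [M]\phi$. Abbreviations: $\mathrm{true}:=\mathsf{k}_{\mathsf{CM}}(\mathsf{CM})$, $\mathrm{false}:=\neg\mathrm{true}$, $\phi\leftrightarrow\psi:=(\phi\to\psi)\wedge(\psi\to\phi)$, $\langle M\rangle\phi:=\neg\neg(\mathsf{k}_{\mathsf{CM}}(M)\wedge\phi)$. LIiP is the smallest set of formulas containing all instances of: the axioms of an adequate Hilbert axiomatization of intuitionistic propositional logic; $\mathsf{k}_a(a)$; $(\mathsf{k}_a(M)\wedge\mathsf{k}_a(M'))\leftrightarrow\mathsf{k}_a((M,M'))$; $[M]\mathsf{k}_{\mathsf{CM}}(M)$; $[M](\phi\to\psi)\to([M]\phi\to[M]\psi)$; $[M]\phi\to(\mathsf{k}_{\mathsf{CM}}(M)\to\phi)$; $[M]\phi\to\langle M\rangle\phi$; $\phi\to[M]\phi$; and closed under modus ponens and the rule: if $\mathsf{k}_{\mathsf{CM}}(M)\to\mathsf{k}_{\mathsf{CM}}(M')$ is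 in the set then so is $[M']\phi\to[M]\phi$ for every $\phi$. Write $\vdash\phi$ for $\phi\in\mathrm{LIiP}$. *)

From mathcomp Require Import all_boot.
Set Implicit Arguments.
Unset Strict Implicit.
Unset Printing Implicit Defensive.

Section LIiP.
Variables (A : finType) (Dat : Type) (CM : A).

Inductive msg : Type :=
| MAg : A -> msg
| MDat : Dat -> msg
| MPair : msg -> msg -> msg.

(* Propositional variables: the atoms k_a(M) plus denumerably many others. *)
Inductive form : Type :=
| FVar : nat -> form
| FK : A -> msg -> form
| FAnd : form -> form -> form
| FOr : form -> form -> form
| FNeg : form -> form
| FImp : form -> form -> form
| FBox : msg -> form -> form.

Definition Ftrue : form := FK CM (MAg CM).
Definition Ffalse : form := FNeg Ftrue.
Definition FIff (p q : form) : form := FAnd (FImp p q) (FImp q p).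
Definition FDia (M : msg) (p : form) : form := FNeg (FNeg (FAnd (FK CM M) p)).

(* LIiP: intuitionistic propositional logic (Kleene's Hilbert system, with
   primitive negation) plus the LIiP axioms and rules. *)
Inductive LIiP : form -> Prop :=
| ax_K p q : LIiP (FImp p (FImp q p))
| ax_S p q r : LIiP (FImp (FImp p q) (FImp (FImp p (FImp q r)) (FImp p r)))
| ax_andI p q : LIiP (FImp p (FImp q (FAnd p q)))
| ax_andE1 p q : LIiP (FImp (FAnd p q) p)
| ax_andE2 p q : LIiP (FImp (FAnd p q) q)
| ax_orI1 p q : LIiP (FImp p (FOr p q))
| ax_orI2 p q : LIiP (FImp q (FOr p q))
| ax_orE p q r : LIiP (FImp (FImp p r) (FImp (FImp q r) (FImp (FOr p q) r)))
| ax_negI p q : LIiP (FImp (FImp p q) (FImp (FImp p (FNeg q)) (FNeg p)))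
| ax_negE p q : LIiP (FImp (FNeg p) (FImp p q))
| ax_kself (a : A) : LIiP (FK a (MAg a))
| ax_kpair (a : A) M M' :
    LIiP (FIff (FAnd (FK a M) (FK a M')) (FK a (MPair M M')))
| ax_boxk M : LIiP (FBox M (FK CM M))
| ax_boxK M p q : LIiP (FImp (FBox M (FImp p q)) (FImp (FBox M p) (FBox M q)))
| ax_boxT M p : LIiP (FImp (FBox M p) (FImp (FK CM M) p))
| ax_boxdia M p : LIiP (FImp (FBox M p) (FDia M p))
| ax_mon M p : LIiP (FImp p (FBox M p))
| r_mp p q : LIiP (FImp p q) -> LIiP p -> LIiP q
| r_box M M' p : LIiP (FImp (FK CM M) (FK CM M')) ->
    LIiP (FImp (FBox M' p) (FBox M p)).

End LIiP.

From mathcomp Require Import all_boot.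

Set Implicit Arguments.
Unset Strict Implicit.

(* [M]-necessitation comes for free from the axiom [phi -> [M]phi]; the box
   then distributes over [k_CM(M) -> phi] and discharges the antecedent with
   [[M]k_CM(M)]. Conversely [[M]phi -> (k_CM(M) -> phi)] is an axiom. *)

Section BoxRules.
Variables (A : finType) (Dat : Type) (CM : A).
Implicit Types (M : msg A Dat) (p q : form A Dat).

Lemma LIiP_box_intro M p : LIiP CM p -> LIiP CM (FBox M p).
Proof. exact: r_mp (ax_mon _ M p). Qed.

Lemma LIiP_box_mp M p q :
  LIiP CM (FBox M (FImp p q)) -> LIiP CM (FBox M p) -> LIiP CM (FBox M q).
Proof. by move=> Hpq; apply: r_mp; apply: r_mp Hpq; apply: ax_boxK. Qed.

Lemma LIiP_box_elim M p : LIiP CM (FBox M p) -> LIiP CM (FImp (FK CM M) p).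
Proof. exact: r_mp (ax_boxT _ M p). Qed.

End BoxRules.

Theorem theorem2p27 (A : finType) (Dat : Type) (CM : A)
    (M : msg A Dat) (phi : form A Dat) :
  LIiP CM (FImp (FK CM M) phi) <-> LIiP CM (FBox M phi).
Proof.
split; last exact: LIiP_box_elim.
by move=> H; apply: LIiP_box_mp (LIiP_box_intro M H) (ax_boxk _ M).
Qed.
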